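(* Let $R$ be a UFD with field of fractions $K$. Let $U \in R[X,Y]$ (polynomial ring in two variables) be such that $K[X,Y] = K[U]^{[1]}$. Then $K[U] \cap R[X,Y]$ is an inert subring of $R[X,Y]$, and $K[U] \cap R[X,Y] = R[W]$ for some element $W \in R[X,Y]$ which is transcendental over $R$ and satisfies $K[W] = K[U]$.
   Context: A subring $D$ of an integral domain $A$ is called inert if whenever $x, y \in A$ with $xy \in D \setminus \{0\}$, then $x, y \in D$. For a subring $C \subseteq D$, $D = C^{[1]}$ means $D = C[T]$ for some $T \in D$ transcendental over $C$. *)

From HB Require Import structures.
From mathcomp Require Import all_boot all_order all_algebra all_fingroup.
Set Implicit Arguments. Unset Strict Implicit. Unset Printing Implicit Defensive.
Import GRing.Theory.
Local Open Scope ring_scope.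

Definition irreducible_elt (R : idomainType) (x : R) : Prop :=
  [/\ x != 0, x \isn't a GRing.unit &
      forall a b : R, x = a * b -> a \is a GRing.unit \/ b \is a GRing.unit].

Definition associated (R : idomainType) (a b : R) : Prop :=
  exists2 u : R, u \is a GRing.unit & a = u * b.

Definition is_UFD (R : idomainType) : Prop :=
  (forall x : R, x != 0 -> x \isn't a GRing.unit ->
     exists s : seq R, (forall y, y \in s -> irreducible_elt y) /\
                       x = \prod_(y <- s) y) /\
  (forall s t : seq R,
     (forall y, y \in s -> irreducible_elt y) ->
     (forall y, y \in t -> irreducible_elt y) ->
     \prod_(y <- s) y = \prod_(y <- t) y ->
     size s = size t /\
     exists sigma : 'S_(size s), forall i : 'I_(size s),
        associated (nth 0 s i) (nth 0 t (sigma i))).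

Definition coefs_in (A : comNzRingType) (C : A -> Prop) (p : {poly A}) : Prop :=
  forall i : nat, C p`_i.

Definition adjoin (A : comNzRingType) (C : A -> Prop) (t : A) : A -> Prop :=
  fun a => exists2 p : {poly A}, coefs_in C p & a = p.[t].

Definition transcendental_over (A : comNzRingType) (C : A -> Prop) (t : A) : Prop :=
  forall p : {poly A}, coefs_in C p -> p.[t] = 0 -> p = 0.

(* D = C^[1] : D = C[T] for some T transcendental over C *)
Definition is_poly_ring_over (A : comNzRingType) (C : A -> Prop) (D : A -> Prop) : Prop :=
  exists T : A, (forall a, D a <-> adjoin C T a) /\ transcendental_over C T.

Definition inert_subring (A : idomainType) (D : A -> Prop) : Prop :=
  [/\ D 1, (forall x y, D x -> D y -> D (x - y)),
      (forall x y, D x -> D y -> D (x * y)) &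
      (forall x y : A, D (x * y) -> x * y != 0 -> D x /\ D y)].

(* ---- Bivariate polynomial rings: R[X,Y] := {poly {poly R}} ---- *)
Definition const2 (R : nzRingType) (r : R) : {poly {poly R}} := r%:P%:P.

Definition consts2 (R : nzRingType) : {poly {poly R}} -> Prop :=
  fun a => exists r : R, a = const2 r.

Definition embed2 (R : idomainType) (f : {poly {poly R}}) :
  {poly {poly {fraction R}}} := map_poly (map_poly (@tofrac R)) f.

From HB Require Import structures.
From mathcomp Require Import all_boot all_order all_algebra all_fingroup.
From mathcomp Require Import generic_quotient ring.
From Stdlib Require Import Classical.
Set Implicit Arguments. Unset Strict Implicit. Unset Printing Implicit Defensive.
Import GRing.Theory.
Local Open Scope ring_scope.

(* Over K = Frac R, K[X,Y] = K[U][T] forces U to be nonconstant, because K[X,Y]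
   is not generated over K by a single element: from Y = Q(T) and X = P(T) the
   chain rule gives T_Y != 0 and then P'(T) = 0, which is absurd after swapping
   X and Y.  A subring C is inert in C[T] by degree count, and inertness pulls
   back along the embedding R[X,Y] -> K[X,Y].
   For the second part write U - U(0,0) = c W with c in R and W primitive (no
   irreducible of R divides W), which exists because R has finite
   factorizations.  If f in R[X,Y] is p(W) with p in K[Z],
   clearing denominators gives d f = q(W) with q in R[Z]; each irreducible
   factor pi of d is prime in R[X,Y] by Gauss' lemma, and since pi does not
   divide W and W(0,0) = 0, comparing constant terms shows inductively that pi
   divides every coefficient of q.  Cancelling d one prime at a time puts f in
   R[W], and W is transcendental over R since it is nonconstant. *)

Definition divides (S : comNzRingType) (a b : S) : Prop := exists c, b = a * c.

Definition prime_elt (S : comNzRingType) (p : S) : Prop :=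
  p != 0 /\ forall a b, divides p (a * b) -> divides p a \/ divides p b.

Section Divides.
Variable S : comNzRingType.
Implicit Types a b c : S.

Lemma divides0 a : divides a 0.
Proof. by exists 0; rewrite mulr0. Qed.

Lemma dividesMr a b : divides a (a * b).
Proof. by exists b. Qed.

Lemma dividesMl a b c : divides a b -> divides a (b * c).
Proof. by case=> d ->; exists (d * c); rewrite mulrA. Qed.

Lemma dividesB a b c : divides a b -> divides a c -> divides a (b - c).
Proof. by case=> d -> [e ->]; exists (d - e); rewrite mulrBr. Qed.

Lemma divides_trans a b c : divides a b -> divides b c -> divides a c.
Proof. by case=> d -> [e ->]; exists (d * e); rewrite mulrA. Qed.

Lemma dividesC_coef a (F : {poly S}) : divides a%:P F <-> forall i, divides a F`_i.
Proof.
split=> [[G ->] i|hF]; first by exists G`_i; rewrite coefCM.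
have ex i : exists c, F`_i == a * c by have [c ->] := hF i; exists c.
exists (\poly_(i < size F) xchoose (ex i)); apply/polyP => i.
rewrite coefCM coef_poly; case: ltnP => hi; first exact/eqP/(xchooseP (ex i)).
by rewrite mulr0 nth_default.
Qed.

End Divides.

Lemma divides_mul2l (S : idomainType) (a b c : S) :
  a != 0 -> divides (a * b) (a * c) -> divides b c.
Proof. by move=> a_neq0 [d]; rewrite -mulrA => /(mulfI a_neq0) ->; exists d. Qed.

Section Gauss.
Variables (S : idomainType) (p : S).
Hypothesis p_prime : prime_elt p.

Lemma not_dividesC_drop (a b : {poly S}) :
  divides p a`_0 -> ~ divides p%:P a -> divides p%:P (a * b) ->
  [/\ size (drop_poly 1 a) < size a, ~ divides p%:P (drop_poly 1 a)
    & divides p%:P (drop_poly 1 a * b)]%N.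
Proof.
move=> pa0 pNa /dividesC_coef pab.
have a0 : a != 0 by apply: contra_not_neq pNa => ->; apply: divides0.
have ea : a = drop_poly 1 a * 'X + (a`_0)%:P.
  apply/polyP => -[|i]; rewrite coefD coefMX coefC /= ?add0r //.
  by rewrite addr0 coef_drop_poly addn1.
split.
- by rewrite size_drop_poly subn1 prednK // size_poly_gt0.
- move=> /dividesC_coef pa1; apply/pNa/dividesC_coef => -[|i] //.
  by have := pa1 i; rewrite coef_drop_poly addn1.
apply/dividesC_coef => i.
have -> : (drop_poly 1 a * b)`_i = (a * b)`_i.+1 - a`_0 * b`_i.+1.
  by rewrite {2}ea mulrDl mulrAC coefD coefMX coefCM addrK.
by apply: dividesB; [apply: pab | apply: dividesMl].
Qed.

Lemma not_dividesC_mul (a b : {poly S}) :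
  ~ divides p%:P a -> ~ divides p%:P b -> ~ divides p%:P (a * b).
Proof.
suff: forall n (a b : {poly S}), (size a + size b <= n)%N ->
    ~ divides p%:P a -> ~ divides p%:P b -> ~ divides p%:P (a * b).
  by move/(_ _ a b (leqnn _)).
elim=> [|n IH] {}a {}b.
  by rewrite leqn0 addn_eq0 size_poly_eq0 => /andP[/eqP -> _] []; apply: divides0.
have peel (a' b' : {poly S}) : (size a' + size b' <= n.+1)%N -> divides p a'`_0 ->
    ~ divides p%:P a' -> ~ divides p%:P b' -> ~ divides p%:P (a' * b').
  move=> hs pa0 pNa pNb pab; have [lt_a pNa1 pa1b] := not_dividesC_drop pa0 pNa pab.
  by apply: (IH _ b' _ pNa1 pNb pa1b); rewrite -ltnS (leq_trans _ hs) // ltn_add2r.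
move=> hs pNa pNb.
have [pa0|pNa0] := classic (divides p a`_0); first exact: peel.
have [pb0|pNb0] := classic (divides p b`_0).
  by rewrite mulrC; apply: peel; rewrite // addnC.
move/dividesC_coef/(_ 0%N); rewrite coef0M.
by case/(proj2 p_prime).
Qed.

Lemma prime_polyC : prime_elt p%:P.
Proof.
split=> [|a b pab]; first by rewrite polyC_eq0; case: p_prime.
by apply: NNPP => /not_or_and [pNa pNb]; apply: not_dividesC_mul pNa pNb pab.
Qed.

End Gauss.

Section Factorization.
Variable R : idomainType.
Implicit Types (p x y u : R) (s t : seq R).

Definition factorization x s : Prop :=
  (forall y, y \in s -> irreducible_elt y) /\ associated x (\prod_(y <- s) y).

Lemma irreducible_unitMl u x :
  u \is a GRing.unit -> irreducible_elt x -> irreducible_elt (u * x).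
Proof.
move=> uU [x0 xNU x_irr]; split.
- by rewrite mulf_neq0 //; apply: contraTneq uU => ->; rewrite unitr0.
- by rewrite unitrMr.
move=> a b e; have : x = (u^-1 * a) * b by rewrite -mulrA -e mulKr.
by case/x_irr; [rewrite unitrMr ?unitrV //; left | right].
Qed.

Lemma prod_irreducible_unit s : (forall y, y \in s -> irreducible_elt y) ->
  \prod_(y <- s) y \is a GRing.unit -> s = [::].
Proof.
case: s => // y s s_irr; rewrite big_cons unitrM => /andP[yU _].
by have [_ /negP] := s_irr y (mem_head y s).
Qed.

Lemma associated_divides x y z : associated x y -> divides y z -> divides x z.
Proof.
by case=> u uU -> [c ->]; exists (u^-1 * c); rewrite mulrAC mulVKr // mulrC.
Qed.

Lemma divides_prod y s : y \in s -> divides y (\prod_(z <- s) z).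
Proof. by move=> ys; rewrite (big_rem y) //=; apply: dividesMr. Qed.

Hypothesis R_ufd : is_UFD R.

Lemma ufd_factorization x : x != 0 -> exists s, factorization x s.
Proof.
move=> x0; have [xU|xNU] := boolP (x \is a GRing.unit).
  by exists [::]; split=> //; exists x; rewrite // big_nil mulr1.
have [s [s_irr ->]] := R_ufd.1 x x0 xNU.
by exists s; split=> //; exists 1; rewrite ?unitr1 ?mul1r.
Qed.

Lemma ufd_associated_cons p s t :
  (forall y, y \in p :: s -> irreducible_elt y) ->
  (forall y, y \in t -> irreducible_elt y) ->
  associated (\prod_(y <- p :: s) y) (\prod_(y <- t) y) ->
  size (p :: s) = size t /\ exists2 y, y \in t & associated p y.
Proof.
move=> ps_irr t_irr [v vU e].
have e' : \prod_(y <- v^-1 * p :: s) y = \prod_(y <- t) y.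
  by move: e; rewrite !big_cons -mulrA => ->; rewrite mulKr.
have p'_irr y : y \in v^-1 * p :: s -> irreducible_elt y.
  rewrite inE => /orP[/eqP -> | ys]; last by apply: ps_irr; rewrite inE ys orbT.
  by apply: irreducible_unitMl; rewrite ?unitrV //; apply/ps_irr/mem_head.
have [size_st [sigma assoc_st]] := R_ufd.2 _ _ p'_irr t_irr e'.
split=> //; exists (nth 0 t (sigma ord0)).
  by rewrite mem_nth // -size_st ltn_ord.
have [w wU /= e0] := assoc_st ord0.
by exists (v * w); rewrite ?unitrM ?vU // -mulrA -e0 mulVKr.
Qed.

Lemma factorization_size_uniq x s t :
  factorization x s -> factorization x t -> size s = size t.
Proof.
move=> [s_irr [u uU ex]] [t_irr [w wU ex']].
have e : \prod_(y <- s) y = (u^-1 * w) * \prod_(y <- t) y.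
  by rewrite -mulrA -ex' ex mulKr.
case: s s_irr {ex} e => [|p s] s_irr e.
  have : (u^-1 * w) * \prod_(y <- t) y \is a GRing.unit by rewrite -e big_nil unitr1.
  by rewrite unitrM => /andP[_ /(prod_irreducible_unit t_irr) ->].
have assoc_st : associated (\prod_(y <- p :: s) y) (\prod_(y <- t) y).
  by exists (u^-1 * w); rewrite ?unitrM ?unitrV ?uU.
by have [] := ufd_associated_cons s_irr t_irr assoc_st.
Qed.

Lemma ufd_irreducible_prime p : irreducible_elt p -> prime_elt p.
Proof.
move=> p_irr; have [p0 _ _] := p_irr; split=> // a b [c ec].
have [->|a0] := eqVneq a 0; first by left; apply: divides0.
have [->|b0] := eqVneq b 0; first by right; apply: divides0.
have c0 : c != 0 by apply: contra_neq (mulf_neq0 a0 b0) => c0; rewrite ec c0 mulr0.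
have [[sa [sa_irr [ua uaU ea]]] [sb [sb_irr [ub ubU eb]]]] :=
  (ufd_factorization a0, ufd_factorization b0).
have [sc [sc_irr [uc ucU ecc]]] := ufd_factorization c0.
have psc_irr y : y \in p :: sc -> irreducible_elt y.
  by rewrite inE => /orP[/eqP -> | /sc_irr].
have sab_irr y : y \in sa ++ sb -> irreducible_elt y.
  by rewrite mem_cat => /orP[/sa_irr | /sb_irr].
have assoc : associated (\prod_(y <- p :: sc) y) (\prod_(y <- sa ++ sb) y).
  exists (uc^-1 * (ua * ub)); first by rewrite !unitrM unitrV ucU uaU ubU.
  by rewrite big_cons big_cat /= -mulrA mulrACA -ea -eb ec ecc mulrCA mulKr.
have [_ [y]] := ufd_associated_cons psc_irr sab_irr assoc.
rewrite mem_cat => /orP[] ys py; [left | right]; apply: associated_divides py _.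
  by rewrite ea mulrC; apply/dividesMl/divides_prod.
by rewrite eb mulrC; apply/dividesMl/divides_prod.
Qed.

Lemma ufd_factorization_cancel p y s :
  irreducible_elt p -> y != 0 -> factorization (p * y) s ->
  exists2 t, factorization y t & (size t < size s)%N.
Proof.
move=> p_irr y0 fs; have [t [t_irr [u uU ey]]] := ufd_factorization y0.
exists t; first by split=> //; exists u.
have fpt : factorization (p * y) (p :: t).
  split; first by move=> z; rewrite inE => /orP[/eqP -> | /t_irr].
  by exists u; rewrite // big_cons ey mulrCA.
by rewrite (factorization_size_uniq fs fpt).
Qed.

End Factorization.

HB.instance Definition _ (S : nzRingType) :=
  GRing.RMorphism.copy (@const2 S) (polyC \o polyC).

Section AdjoinConsts2.
Variable S : comNzRingType.
Implicit Types (p q : {poly S}) (t a b : {poly {poly S}}).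

Lemma coefs_in_consts2P (P : {poly {poly {poly S}}}) :
  coefs_in (@consts2 S) P <-> exists p, P = p^:P^:P.
Proof.
split=> [P_const | [p -> i]]; last by exists p`_i; rewrite !coef_map.
exists (map_poly (fun c : {poly {poly S}} => c`_0`_0) P); apply/polyP => i.
by rewrite !coef_map /= coef_map_id0 ?coef0 //; have [r ->] := P_const i; rewrite !coefC.
Qed.

Lemma adjoin_consts2P t a : adjoin (@consts2 S) t a <-> exists p, a = p^:P \Po t.
Proof.
split=> [[P /coefs_in_consts2P [p ->] ->] | [p ->]]; first by exists p.
by exists p^:P^:P; first by apply/coefs_in_consts2P; exists p.
Qed.

Lemma adjoin_consts2_const t c : adjoin (@consts2 S) t (const2 c).
Proof. by apply/adjoin_consts2P; exists c%:P; rewrite map_polyC comp_polyC. Qed.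

Lemma adjoin_consts2_id t : adjoin (@consts2 S) t t.
Proof. by apply/adjoin_consts2P; exists 'X; rewrite map_polyX comp_polyX. Qed.

Lemma adjoin_consts2D t a b : adjoin (@consts2 S) t a -> adjoin (@consts2 S) t b ->
  adjoin (@consts2 S) t (a + b).
Proof.
move=> /adjoin_consts2P [p ->] /adjoin_consts2P [q ->].
by apply/adjoin_consts2P; exists (p + q); rewrite rmorphD comp_polyD.
Qed.

Lemma adjoin_consts2B t a b : adjoin (@consts2 S) t a -> adjoin (@consts2 S) t b ->
  adjoin (@consts2 S) t (a - b).
Proof.
move=> /adjoin_consts2P [p ->] /adjoin_consts2P [q ->].
by apply/adjoin_consts2P; exists (p - q); rewrite rmorphB comp_polyB.
Qed.

Lemma adjoin_consts2M t a b : adjoin (@consts2 S) t a -> adjoin (@consts2 S) t b ->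
  adjoin (@consts2 S) t (a * b).
Proof.
move=> /adjoin_consts2P [p ->] /adjoin_consts2P [q ->].
by apply/adjoin_consts2P; exists (p * q); rewrite rmorphM comp_polyM.
Qed.

Lemma adjoin_consts2_trans s t a : adjoin (@consts2 S) s t ->
  adjoin (@consts2 S) t a -> adjoin (@consts2 S) s a.
Proof.
move=> /adjoin_consts2P [q ->] /adjoin_consts2P [p ->].
by apply/adjoin_consts2P; exists (p \Po q); rewrite map_comp_poly comp_polyA.
Qed.

End AdjoinConsts2.

Lemma adjoin_consts2_affine (S : comUnitRingType) (a b : S) (t : {poly {poly S}}) :
  a \is a GRing.unit -> forall g,
  adjoin (@consts2 S) t g <-> adjoin (@consts2 S) (const2 b + const2 a * t) g.
Proof.
move=> aU g; split; apply: adjoin_consts2_trans; last first.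
  apply: adjoin_consts2D; first exact: adjoin_consts2_const.
  by apply: adjoin_consts2M; [apply: adjoin_consts2_const | apply: adjoin_consts2_id].
have et : t = const2 a^-1 * (const2 b + const2 a * t - const2 b).
  by rewrite [const2 b + _]addrC addrK mulrA -rmorphM mulVr // rmorph1 mul1r.
rewrite {2}et; apply: adjoin_consts2M; first exact: adjoin_consts2_const.
by apply: adjoin_consts2B; [apply: adjoin_consts2_id | apply: adjoin_consts2_const].
Qed.

Section Transcendence.
Variable S : idomainType.
Implicit Types (p : {poly S}) (W : {poly {poly S}}).

Lemma comp_poly_consts2_eq0 W p : ~ consts2 W -> p^:P \Po W = 0 -> p = 0.
Proof.
move=> W_nconst; have [W_le1|W_gt1] := leqP (size W) 1; last first.
  by move/eqP; rewrite comp_poly_eq0 // map_polyC_eq0 => /eqP.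
rewrite [W]size1_polyC // comp_polyCr => /eqP; rewrite polyC_eq0.
rewrite -[_.[_]]/(p \Po W`_0) comp_poly_eq0 => [/eqP //|].
rewrite ltnNge; apply/negP; apply: contra_not W_nconst => /size1_polyC W0.
by exists W`_0`_0; rewrite /const2 -W0; apply: size1_polyC.
Qed.

Lemma transcendental_nonconst W : ~ consts2 W -> transcendental_over (@consts2 S) W.
Proof.
move=> W_nconst P /coefs_in_consts2P [p ->].
by move=> /(comp_poly_consts2_eq0 W_nconst) ->; rewrite !rmorph0.
Qed.

End Transcendence.

Lemma deriv_comp_map_polyC (K : comNzRingType) (p : {poly K}) (T : {poly {poly K}}) :
  (p^:P \Po T)^`() = (p^`()^:P \Po T) * T^`().
Proof. by rewrite deriv_comp deriv_map. Qed.

Lemma adjoin_consts2_not_full (K : idomainType) (T : {poly {poly K}}) :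
  ~ (forall a, adjoin (@consts2 K) T a).
Proof.
move=> T_full.
have [/adjoin_consts2P [P eY] /adjoin_consts2P [Q eX]] := (T_full 'Y, T_full 'X).
have T'_neq0 : T^`() != 0.
  apply/eqP => T'0; have := congr1 deriv eX.
  by rewrite derivX deriv_comp_map_polyC T'0 mulr0 => /eqP; rewrite oner_eq0.
have P'T : P^`()^:P \Po T = 0.
  apply/eqP; rewrite -(mulIr_eq0 _ (mulIf T'_neq0)) -deriv_comp_map_polyC -eY.
  by rewrite derivC.
have := congr1 (fun u => (swapXY u)^`()) eY; rewrite /= !swapXY_comp_poly swapXY_Y.
rewrite derivX deriv_comp_map_polyC -swapXY_comp_poly P'T raddf0 mul0r.
by move/eqP; rewrite oner_eq0.
Qed.

Lemma adjoin_consts2_of_const (S : comNzRingType) (u a : {poly {poly S}}) :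
  consts2 u -> adjoin (@consts2 S) u a -> consts2 a.
Proof.
by move=> [k ->] /adjoin_consts2P [p ->]; exists p.[k]; rewrite comp_polyCr horner_map.
Qed.

Lemma full_adjoin_nonconst (K : idomainType) (u T : {poly {poly K}}) :
  (forall a, adjoin (adjoin (@consts2 K) u) T a) -> ~ consts2 u.
Proof.
move=> T_full u_const; apply: (adjoin_consts2_not_full (T := T)) => a.
have [P P_coefs ->] := T_full a; exists P => // i.
exact: adjoin_consts2_of_const u_const (P_coefs i).
Qed.

Section InertAdjoin.
Variables (A : idomainType) (C : A -> Prop).
Hypotheses (C1 : C 1) (CB : forall x y, C x -> C y -> C (x - y))
  (CM : forall x y, C x -> C y -> C (x * y)).

Let C0 : C 0. Proof. by rewrite -(subrr 1); apply: CB. Qed.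

Let CD x y : C x -> C y -> C (x + y).
Proof. by move=> Cx Cy; rewrite -[y]opprK -(sub0r y); apply: CB => //; apply: CB. Qed.

Lemma coefs_inM (P Q : {poly A}) : coefs_in C P -> coefs_in C Q -> coefs_in C (P * Q).
Proof. by move=> CP CQ i; rewrite coefM; apply: big_ind => // j _; apply: CM. Qed.

Lemma inert_adjoin T : transcendental_over C T -> forall a b,
  adjoin C T a -> adjoin C T b -> C (a * b) -> a * b != 0 -> C a /\ C b.
Proof.
move=> T_tr _ _ [P CP ->] [Q CQ ->] C_PQ PQ_neq0.
have ePQ : P * Q = (P.[T] * Q.[T])%:P.
  apply/eqP; rewrite -subr_eq0; apply/eqP/T_tr; last first.
    by rewrite hornerD hornerN hornerC hornerM subrr.
  move=> i; rewrite coefB; apply: CB; first exact: coefs_inM.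
  by rewrite coefC; case: eqP.
have /andP[/eqP sP /eqP sQ] : (size P == 1) && (size Q == 1).
  by rewrite -size_mul_eq1 ePQ size_polyC PQ_neq0.
by rewrite [P]size1_polyC ?sP // [Q]size1_polyC ?sQ // !hornerC.
Qed.

Lemma inert_subring_full_adjoin T : transcendental_over C T ->
  (forall a, adjoin C T a) -> inert_subring C.
Proof.
move=> T_tr T_full; split=> // x y Cxy xy_neq0.
exact: inert_adjoin T_tr _ _ (T_full x) (T_full y) Cxy xy_neq0.
Qed.

End InertAdjoin.

Lemma inert_subring_preim (A B : idomainType) (f : {rmorphism A -> B}) (D : B -> Prop) :
  injective f -> inert_subring D -> inert_subring (fun a => D (f a)).
Proof.
move=> f_inj [D1 DB DM D_inert]; split=> [|x y|x y|x y].
- by rewrite rmorph1.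
- by rewrite rmorphB; apply: DB.
- by rewrite rmorphM; apply: DM.
rewrite rmorphM => Dxy xy_neq0; apply: D_inert Dxy _.
by rewrite -rmorphM -(rmorph0 f) (inj_eq f_inj).
Qed.

Definition primitive2 (R : idomainType) (W : {poly {poly R}}) : Prop :=
  forall p, irreducible_elt p -> ~ divides (const2 p) W.

Lemma coef_const2M (R : nzRingType) (c : R) (W : {poly {poly R}}) i j :
  (const2 c * W)`_i`_j = c * W`_i`_j.
Proof. by rewrite !coefCM. Qed.

Lemma prime_const2 (R : idomainType) (p : R) : prime_elt p -> prime_elt (const2 p).
Proof. by move=> p_prime; apply/prime_polyC/prime_polyC. Qed.

Section Primitive2.
Variable R : idomainType.
Implicit Types (c d p : R) (q : {poly R}) (V W : {poly {poly R}}).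

Lemma dividesC_comp_prime p W : prime_elt p -> W`_0`_0 = 0 ->
  ~ divides (const2 p) W -> forall q, divides (const2 p) (q^:P \Po W) -> divides p%:P q.
Proof.
move=> p_prime W00 pNW; have [_ pp_prime] := prime_const2 p_prime.
elim/poly_ind => [|q c IH]; first by move=> _; apply: divides0.
rewrite rmorphD rmorphM /= map_polyX map_polyC comp_polyD comp_polyM comp_polyX comp_polyC.
move=> pqc; have [c' ec] : divides p c.
  have [G eG] := pqc; exists G`_0`_0.
  move/(congr1 (fun P : {poly {poly R}} => P`_0`_0)): eG.
  by rewrite coef_const2M !coefD !coef0M W00 mulr0 add0r !coefC.
have /pp_prime [] // : divides (const2 p) ((q^:P \Po W) * W).
  rewrite -[_ * W](addrK (const2 c)); apply: dividesB pqc _.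
  by rewrite ec rmorphM; apply: dividesMr.
by case/IH=> g ->; exists (g * 'X + c'%:P); rewrite ec mulrDr polyCM mulrA.
Qed.

Hypothesis R_ufd : is_UFD R.

(* Induction on the number of irreducible factors of a fixed nonzero
   coefficient of V, which is well defined by unique factorization. *)
Lemma primitive2_decomposition V : V != 0 ->
  exists c W, [/\ c != 0, V = const2 c * W & primitive2 W].
Proof.
move=> V_neq0.
have [i Vi_neq0] : exists i, V`_i != 0.
  by exists (size V).-1; rewrite -lead_coefE lead_coef_eq0.
have [j Vij_neq0] : exists j, V`_i`_j != 0.
  by exists (size V`_i).-1; rewrite -lead_coefE lead_coef_eq0.
suff: forall n W, W`_i`_j != 0 ->
    (exists2 s, factorization (W`_i`_j) s & (size s < n)%N) ->
    exists c W', [/\ c != 0, W = const2 c * W' & primitive2 W'].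
  have [s fs] := ufd_factorization R_ufd Vij_neq0.
  by move/(_ (size s).+1 V Vij_neq0); apply; exists s.
elim=> [|n IH] W Wij_neq0 [s fs lt_sn]; first by rewrite ltn0 in lt_sn.
have [W_prim|W_nprim] := classic (primitive2 W).
  by exists 1, W; rewrite oner_neq0 rmorph1 mul1r.
have [p p_irr [W1 eW]] : exists2 p, irreducible_elt p & divides (const2 p) W.
  by apply: NNPP => none; apply: W_nprim => p p_irr pW; apply: none; exists p.
have [p_neq0 _ _] := p_irr.
have eWij : W`_i`_j = p * W1`_i`_j by rewrite eW coef_const2M.
have W1ij_neq0 : W1`_i`_j != 0.
  by apply: contra_neq Wij_neq0; rewrite eWij => ->; rewrite mulr0.
rewrite eWij in fs; have [t ft lt_ts] := ufd_factorization_cancel R_ufd p_irr W1ij_neq0 fs.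
have [|c [W' [c_neq0 eW1 W'_prim]]] := IH W1 W1ij_neq0.
  by exists t; last exact: leq_trans lt_ts lt_sn.
by exists (p * c), W'; rewrite mulf_neq0 // eW eW1 rmorphM mulrA.
Qed.

Lemma dividesC_comp_primitive2 d W : d != 0 -> primitive2 W -> W`_0`_0 = 0 ->
  forall q, divides (const2 d) (q^:P \Po W) -> divides d%:P q.
Proof.
move=> d_neq0 W_prim W00; have [s [s_irr [u uU ->]]] := ufd_factorization R_ufd d_neq0.
elim: s s_irr => [|p s IH] s_irr q.
  by rewrite big_nil mulr1 => _; exists (u^-1%:P * q); rewrite mulrA -polyCM mulrV ?mul1r.
have p_irr := s_irr p (mem_head p s); have [p_neq0 _ _] := p_irr.
rewrite big_cons mulrCA rmorphM /= => pdq.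
have [q1 eq1] : divides p%:P q.
  apply: dividesC_comp_prime (ufd_irreducible_prime R_ufd p_irr) W00 (W_prim p p_irr) _ _.
  by apply: divides_trans pdq; apply: dividesMr.
have s'_irr y : y \in s -> irreducible_elt y.
  by move=> ys; apply: s_irr; rewrite inE ys orbT.
have [|q2 eq2] := IH s'_irr q1.
  apply: (divides_mul2l (a := const2 p)); first by rewrite !polyC_eq0.
  have <- // : q^:P \Po W = const2 p * (q1^:P \Po W).
  by rewrite eq1 rmorphM comp_polyM /= map_polyC comp_polyC.
by exists q2; rewrite eq1 eq2 mulrA -polyCM mulrCA.
Qed.

Lemma primitive2_normal_form U : ~ consts2 U -> exists c W,
  [/\ c != 0, U = const2 U`_0`_0 + const2 c * W, primitive2 W, W`_0`_0 = 0
     & ~ consts2 W].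
Proof.
move=> U_nconst; have V_neq0 : U - const2 U`_0`_0 != 0.
  by apply/eqP => /eqP; rewrite subr_eq0 => /eqP eU; apply: U_nconst; exists U`_0`_0.
have [c [W [c_neq0 eV W_prim]]] := primitive2_decomposition V_neq0.
have W00 : W`_0`_0 = 0.
  move/(congr1 (fun P : {poly {poly R}} => P`_0`_0))/esym/eqP: eV.
  by rewrite coef_const2M !coefB !coefC subrr mulf_eq0 (negbTE c_neq0) => /eqP.
exists c, W; split=> //; first by rewrite -eV addrC subrK.
move=> [k eW]; move: W00 V_neq0; rewrite eV eW /const2 !coefC /= => ->.
by rewrite !polyC0 mulr0 eqxx.
Qed.

End Primitive2.

HB.instance Definition _ (R : idomainType) :=
  GRing.RMorphism.copy (@embed2 R) (map_poly (map_poly (@tofrac R))).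

Section Fraction.
Variable R : idomainType.
Local Notation K := {fraction R}.

Lemma frac_clear_denominator (x : K) :
  exists n d, d != 0 /\ x * tofrac d = tofrac n.
Proof.
elim/quotW: x => r; exists \n_r, \d_r; split; first exact: denom_ratioP.
have -> : forall a b : K, a * b = FracField.mul a b by [].
rewrite !piE; apply/eqmodP.
rewrite /= FracField.equivfE /FracField.mulf /= !numden_Ratio ?mulf_neq0 ?oner_eq0 //;
  try exact: denom_ratioP.
by rewrite !mulr1 mulrC.
Qed.

Lemma poly_clear_denominators (p : {poly K}) :
  exists d q, d != 0 /\ p * (tofrac d)%:P = map_poly (@tofrac R) q.
Proof.
elim/poly_ind: p => [|p c [d [q [d_neq0 epq]]]].
  by exists 1, 0; rewrite oner_neq0 mul0r rmorph0.
have [n [e [e_neq0 ece]]] := frac_clear_denominator c.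
exists (d * e), (q * 'X * e%:P + (n * d)%:P); split; first by rewrite mulf_neq0.
rewrite rmorphD !rmorphM /= map_polyX !map_polyC /= -epq -ece !rmorphM.
ring.
Qed.

Lemma embed2_inj : injective (@embed2 R).
Proof.
have tofrac_inj : injective (@tofrac R) by move=> x y /eqP; rewrite tofrac_eq => /eqP.
exact: map_inj_poly (map_inj_poly tofrac_inj (rmorph0 _)) (rmorph0 _).
Qed.

Lemma embed2_const2 (r : R) : embed2 (const2 r) = const2 (tofrac r).
Proof. by rewrite /embed2 /const2 map_polyC /= map_polyC. Qed.

Lemma embed2_comp (p : {poly R}) (W : {poly {poly R}}) :
  embed2 (p^:P \Po W) = (map_poly (@tofrac R) p)^:P \Po embed2 W.
Proof.
rewrite /embed2 map_comp_poly -!map_poly_comp; congr (_ \Po _).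
by apply: eq_map_poly => x /=; rewrite map_polyC.
Qed.

Lemma adjoin_consts2_embed2 (R_ufd : is_UFD R) (W : {poly {poly R}}) :
  primitive2 W -> W`_0`_0 = 0 -> forall f,
  adjoin (@consts2 K) (embed2 W) (embed2 f) <-> adjoin (@consts2 R) W f.
Proof.
move=> W_prim W00 f; split=> /adjoin_consts2P [p ef]; apply/adjoin_consts2P; last first.
  by exists (map_poly (@tofrac R) p); rewrite ef embed2_comp.
have [d [q [d_neq0 epq]]] := poly_clear_denominators p.
have edf : q^:P \Po W = const2 d * f.
  apply: embed2_inj; rewrite rmorphM /= embed2_const2 ef embed2_comp -epq.
  by rewrite rmorphM comp_polyM /= map_polyC comp_polyC mulrC.
have [q' eq'] : divides d%:P q.
  by apply: (dividesC_comp_primitive2 R_ufd d_neq0 W_prim W00); exists f.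
have d2_neq0 : const2 d != 0 by rewrite !polyC_eq0.
exists q'; apply: (mulfI d2_neq0).
by rewrite -edf eq' rmorphM comp_polyM /= map_polyC comp_polyC.
Qed.

End Fraction.

Theorem lemma5p1 (R : idomainType) (hR : is_UFD R) (U : {poly {poly R}})
  (hU : is_poly_ring_over
          (adjoin (@consts2 {fraction R}) (embed2 U))
          (fun _ => True)) :
  inert_subring (fun f : {poly {poly R}} =>
                   adjoin (@consts2 {fraction R}) (embed2 U) (embed2 f)) /\
  exists W : {poly {poly R}},
    [/\ forall f : {poly {poly R}},
          adjoin (@consts2 {fraction R}) (embed2 U) (embed2 f) <->
          adjoin (@consts2 R) W f,
        transcendental_over (@consts2 R) W &
        forall g : {poly {poly {fraction R}}},
          adjoin (@consts2 {fraction R}) (embed2 W) g <->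
          adjoin (@consts2 {fraction R}) (embed2 U) g].
Proof.
have [T [T_full T_tr]] := hU.
have U_nconst : ~ consts2 U.
  move=> [k eU]; apply: (full_adjoin_nonconst (fun a => (T_full a).1 I)).
  by exists (tofrac k); rewrite eU embed2_const2.
have [c [W [c_neq0 eU W_prim W00 W_nconst]]] := primitive2_normal_form hR U_nconst.
have KW_KU g : adjoin (@consts2 _) (embed2 W) g <-> adjoin (@consts2 _) (embed2 U) g.
  rewrite eU rmorphD rmorphM /= !embed2_const2.
  by apply: adjoin_consts2_affine; rewrite unitfE tofrac_eq0.
have KU_inert : inert_subring (adjoin (@consts2 {fraction R}) (embed2 U)).
  apply: (inert_subring_full_adjoin _ _ _ T_tr) => [|a b|a b|a]; last exact: (T_full a).1 I.
  - by rewrite -(rmorph1 (@const2 _)); apply: adjoin_consts2_const.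
  - exact: adjoin_consts2B.
  - exact: adjoin_consts2M.
(* Passing [@embed2 R] directly as the rmorphism makes unification diverge. *)
pose embed2R : {rmorphism _ -> _} := @embed2 R.
split; first exact: (@inert_subring_preim _ _ embed2R _ (@embed2_inj R) KU_inert).
exists W; split=> [f||] //; last exact: transcendental_nonconst.
by rewrite -KW_KU; apply: adjoin_consts2_embed2.
Qed.
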